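(* Let $G$ be an edge-colored graph. The following are equivalent: (1) $G$ is PC acyclic of type 5; (2) the orientation procedure described below completes without a conflict and the resulting digraph is acyclic; (3) every vertex of $G$ is incident to edges of at most two colors, and every cycle $C$ in $G$ has a positive even number of $C$-monochromatic vertices.
   Context: An edge-colored graph is a finite undirected graph in which every edge is assigned a color. An ordering $v_1,\dots,v_n$ of $V(G)$ is of type 5 if for every $i\in[n]$, all edges from $v_i$ to $\{v_{i+1},\dots,v_n\}$ have the same color, all edges from $v_i$ to $\{v_1,\dots,v_{i-1}\}$ have the same color, and these two colors are different. $G$ is PC acyclic of type 5 if it has an ordering of its vertices of type 5. For a cycle $C$ in $G$, a vertex of $C$ is $C$-monochromatic if its two incident edges on $C$ have the same color. The orientation procedure: first check that each vertex is incident to edges of at most two colors (otherwise the procedure fails). Choose an arbitrary vertex $x$ (in each connected component) and orient the edges of one color incident to $x$ out of $x$ and the edges of the other color towards $x$. Then repeatedly, for every unmarked vertex $y$ that has an arc into it (respectively out of it) coming from an edge of color $i$, mark $y$ and orient all edges of color $i$ incident to $y$ towards $y$ (respectively out of $y$) and all other edges incident to $y$ out of $y$ (respectively towards $y$). The procedure stops with a conflict if orienting the edges incident to some $y$ causes some other vertex $z$ to (a) have two arcs of different colors oriented into it or two arcs of different colors oriented out of it, or (b) have an arc into it and an arc out of it of the same color. It completes if all edges are oriented without such a conflict. *)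

From mathcomp Require Import all_boot.
Set Implicit Arguments. Unset Strict Implicit. Unset Printing Implicit Defensive.

Section EdgeColored.
(* An edge-colored graph: vertex set T (finite), simple undirected adjacency
   relation adj (assumed symmetric and irreflexive in the theorem), and a
   coloring col of the edges (col u v is the color of the edge uv; assumed
   symmetric on edges in the theorem). *)
Variables (T : finType) (K : eqType) (adj : rel T) (col : T -> T -> K).

(* An ordering v_1,...,v_n of V(G) is a duplicate-free sequence containing
   every vertex; the position of v is index v s. *)
Definition type5_ordering (s : seq T) : Prop :=
  [/\ uniq s, (forall v, v \in s) &
      forall v u w, adj v u -> adj v w ->
        [/\ (index v s < index u s -> index v s < index w s -> col v u = col v w),
            (index u s < index v s -> index w s < index v s -> col v u = col v w) &
            (index u s < index v s -> index v s < index w s -> col v u <> col v w)]].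

Definition PC_acyclic_type5 : Prop := exists s, type5_ordering s.

Definition at_most_two_colors : Prop :=
  forall x u v w, adj x u -> adj x v -> adj x w ->
    [\/ col x u = col x v, col x u = col x w | col x v = col x w].

(* A state of the procedure: the set of marked vertices and the current
   (partial) orientation, arc u v meaning the edge uv is oriented u -> v. *)
Record pstate := PState { marked : {set T}; arc : rel T }.

Definition init_state : pstate := PState set0 (fun _ _ => false).

(* Orient all edges incident to y: edges of color i out of y if out = true
   (towards y if out = false), all other edges incident to y the other way. *)
Definition orient_at (a : rel T) (y : T) (i : K) (out : bool) : rel T :=
  fun u v =>
    if u == y then adj y v && ((col y v == i) == out)
    else if v == y then adj y u && ((col y u == i) == ~~ out)
    else a u v.

Definition conflict (a : rel T) : Prop :=
  exists z u w,
    [\/ a u z /\ a w z /\ col u z <> col w z,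
        a z u /\ a z w /\ col z u <> col z w
      | a u z /\ a z w /\ col u z = col z w].

Inductive pstep : pstate -> pstate -> Prop :=
| pstep_start (s : pstate) (x : T) (i : K) (out : bool) :
    x \notin marked s ->
    (forall m, m \in marked s -> ~~ connect adj x m) ->
    ((exists z, adj x z /\ col x z = i) \/ (forall z, ~~ adj x z)) ->
    pstep s (PState (x |: marked s) (orient_at (arc s) x i out))
| pstep_in (s : pstate) (y w : T) :
    y \notin marked s -> arc s w y ->
    pstep s (PState (y |: marked s) (orient_at (arc s) y (col w y) false))
| pstep_out (s : pstate) (y w : T) :
    y \notin marked s -> arc s y w ->
    pstep s (PState (y |: marked s) (orient_at (arc s) y (col y w) true)).

(* States reachable by a run of the procedure; the procedure stops as soon as
   a conflict occurs, so steps are only taken from conflict-free states. *)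
Inductive reachable : pstate -> Prop :=
| reach_init : reachable init_state
| reach_step (s s' : pstate) :
    reachable s -> ~ conflict (arc s) -> pstep s s' -> reachable s'.

Definition terminal (s : pstate) : Prop := forall s', ~ pstep s s'.

Definition acyclic_digraph (a : rel T) : Prop :=
  forall u v, a u v -> ~~ connect a v u.

(* The orientation procedure completes without conflict (whatever the
   arbitrary choices made) and the resulting digraph is acyclic. *)
Definition procedure_succeeds_acyclic : Prop :=
  [/\ at_most_two_colors,
      (forall s, reachable s -> ~ conflict (arc s)) &
      (forall s, reachable s -> terminal s ->
         (forall u v, adj u v -> arc s u v || arc s v u) /\ acyclic_digraph (arc s))].

Definition is_graph_cycle (p : seq T) : bool :=
  [&& cycle adj p, uniq p & 2 < size p].

Definition mono_count (p : seq T) : nat :=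
  count (fun v => col (prev p v) v == col v (next p v)) p.

Definition cycle_condition : Prop :=
  at_most_two_colors /\
  forall p, is_graph_cycle p -> 0 < mono_count p /\ ~~ odd (mono_count p).

End EdgeColored.

From Pilot Require Import Defs.
From mathcomp Require Import all_boot zify.
From Stdlib Require Import Lia Classical.
Set Implicit Arguments. Unset Strict Implicit. Unset Printing Implicit Defensive.

(* A type-5 ordering is the same thing as a topological order of an acyclic,
   conflict-free orientation: orient every edge towards its later endpoint, and
   conversely sort the vertices by their number of ancestors.

   An ordering labels the edges at a vertex as going to earlier or to later
   neighbours, and type 5 says exactly that this label separates the (hence at
   most two) colour classes.  Summing these labels around a cycle shows that the
   number of monochromatic vertices is even, and the latest vertex of a cycle is
   monochromatic.  Conversely, label the edges at each vertex by comparing their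
   colour with a reference colour there, and call an edge crossing when its two
   end labels agree.  The cycle condition, extended from cycles to closed walks,
   says that every closed walk has an even number of crossing edges; so flipping
   the labels at a vertex by the parity of crossings on a path from the root of
   its component makes the labels antisymmetric, i.e. an orientation without
   conflict, and a directed cycle of it would have no monochromatic vertex.

   Every state of the orientation procedure orients the edges it has reached
   along a fixed type-5 ordering or against it, uniformly on each component; so
   the procedure never conflicts, and it ends (each step marks a vertex) with an
   acyclic orientation. *)

Section WalkSums.
Variable T : eqType.
Implicit Types (h : T -> T -> nat) (x y : T) (p q : seq T).

Fixpoint walk_sum h x p : nat :=
  if p is y :: p' then h x y + walk_sum h y p' else 0.

Lemma eq_walk_sum h1 h2 x p : h1 =2 h2 -> walk_sum h1 x p = walk_sum h2 x p.
Proof. by move=> eqh; elim: p x => //= y p IHp x; rewrite eqh IHp. Qed.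

Lemma eq_path_walk_sum (e : rel T) h1 h2 x p : path e x p ->
  (forall a b, e a b -> h1 a b = h2 a b) -> walk_sum h1 x p = walk_sum h2 x p.
Proof.
move=> + eqh; elim: p x => //= y p IHp x /andP[exy pp].
by rewrite eqh // IHp.
Qed.

Lemma walk_sum_cat h x p q :
  walk_sum h x (p ++ q) = walk_sum h x p + walk_sum h (last x p) q.
Proof. by elim: p x => //= y p IHp x; rewrite IHp addnA. Qed.

Lemma walk_sumD h1 h2 x p :
  walk_sum (fun a b => h1 a b + h2 a b) x p = walk_sum h1 x p + walk_sum h2 x p.
Proof. by elim: p x => //= y p IHp x; rewrite IHp; lia. Qed.

Lemma walk_sum1 x p : walk_sum (fun _ _ => 1) x p = size p.
Proof. by elim: p x => //= y p IHp x; rewrite IHp. Qed.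

Lemma odd_walk_sum h x p :
  (forall a b, odd (h a b)) -> odd (walk_sum h x p) = odd (size p).
Proof. by move=> oddh; elim: p x => //= y p IHp x; rewrite oddD IHp oddh. Qed.

Lemma last_rev_belast x p : last (last x p) (rev (belast x p)) = x.
Proof. by rewrite -(last_cons x) -rev_rcons -lastI rev_cons last_rcons. Qed.

Lemma walk_sum_rev h x p :
  walk_sum h (last x p) (rev (belast x p)) = walk_sum (fun a b => h b a) x p.
Proof.
elim: p x => //= y p IHp x.
by rewrite rev_cons -cats1 walk_sum_cat IHp last_rev_belast /= addn0 addnC.
Qed.

Lemma sum_next_at h y0 x q : uniq (x :: q) ->
  \sum_(v <- x :: q) h v (next_at v y0 x q) = walk_sum h x (rcons q y0).
Proof.
elim: q x => [|y q IHq] x /=; first by rewrite big_cons big_nil eqxx addn0.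
case/andP=> xNyq /andP[yNq uq]; rewrite big_cons eqxx; congr (_ + _).
rewrite -(IHq y) /= ?yNq //; apply: eq_big_seq => v vin.
by case: eqP => // vx; rewrite -vx vin in xNyq.
Qed.

Lemma sum_next h x q : uniq (x :: q) ->
  \sum_(v <- x :: q) h v (next (x :: q) v) = walk_sum h x (rcons q x).
Proof. exact: sum_next_at. Qed.

Lemma sum_prev h x q : uniq (x :: q) ->
  \sum_(v <- x :: q) h (prev (x :: q) v) v = walk_sum h x (rcons q x).
Proof.
set c := x :: q => uc.
have perm_next : perm_eq c (map (next c) c).
  apply: uniq_perm => //; first by rewrite map_inj_in_uniq // => a b _ _ /(can_inj (prev_next uc)).
  move=> v; apply/idP/mapP => [vc|[u uc' ->]]; last by rewrite mem_next.
  by exists (prev c v); rewrite ?mem_prev ?next_prev.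
by rewrite (perm_big _ perm_next) big_map -sum_next //; apply: eq_bigr => v _; rewrite prev_next.
Qed.

Lemma not_uniq_split p : ~~ uniq p -> exists a y b d, p = a ++ y :: b ++ y :: d.
Proof.
elim: p => //= z p IHp; rewrite negb_and negbK => /orP[/splitPr[b d]|].
  by exists [::], z, b, d.
by case/IHp=> [a [y [b [d ->]]]]; exists (z :: a), y, b, d.
Qed.

(* Every closed walk x :: rcons q x is glued, at repeated vertices, from cycles. *)
Lemma closed_walk_ind (e : rel T) (P : T -> seq T -> Prop) :
  (forall x q, uniq (x :: q) -> path e x (rcons q x) -> P x q) ->
  (forall x a b, P x a -> P x b -> P x (a ++ x :: b)) ->
  (forall x a y b d, P y b -> P x (a ++ y :: d) -> P x (a ++ y :: b ++ y :: d)) ->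
  forall x q, path e x (rcons q x) -> P x q.
Proof.
move=> Pcycle Pglue Pinsert x q.
have [n] := ubnP (size q); elim: n x q => // n IHn x q sq pq.
have [uxq|] := boolP (uniq (x :: q)); first exact: Pcycle uxq pq.
rewrite /= negb_and negbK => /orP[xq|/not_uniq_split [a [y [b [d Eq]]]]].
  case/splitPr: xq sq pq => a b; rewrite size_cat /= => sq.
  rewrite rcons_cat /= cat_path /= => /and3P[pa ex pb].
  by apply: Pglue; apply: IHn => //; rewrite ?rcons_path ?pa //; lia.
move: sq pq; rewrite Eq !size_cat /= size_cat /= => sq.
rewrite rcons_cat /= cat_path /= rcons_cat /= cat_path /=.
case/and3P=> pa ea /andP[pb /andP[eb pd]].
apply: Pinsert; apply: IHn; rewrite ?size_cat /=; try lia.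
- by rewrite rcons_path pb.
- by rewrite rcons_cat cat_path /= pa ea.
Qed.

Lemma path_crossing_edge (e : rel T) (M : {pred T}) x p :
  path e x p -> x \notin M -> last x p \in M ->
  exists u v, [/\ e u v, u \notin M & v \in M].
Proof.
elim: p x => [|y p IHp] x /=; first by move=> _ /negbTE->.
case/andP=> exy py xNM lM; have [yM|yNM] := boolP (y \in M).
  by exists x, y.
exact: IHp py yNM lM.
Qed.

End WalkSums.

Section EdgeColoredGraph.
Variables (T : finType) (K : eqType) (adj : rel T) (col : T -> T -> K).
Hypothesis adj_sym : symmetric adj.
Hypothesis adj_irr : irreflexive adj.
Hypothesis col_sym : forall u v, adj u v -> col u v = col v u.

Lemma adj_neq u v : adj u v -> u != v.
Proof. by apply: contraTneq => ->; rewrite adj_irr. Qed.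

(* Both a type-5 ordering (earlier or later neighbour) and the orientation built
   from the cycle condition label the edges at each vertex in this way. *)
Definition col_labelling (f : T -> T -> bool) : Prop :=
  forall v u w, adj v u -> adj v w -> (f v u == f v w) = (col v u == col v w).

Definition component_const (g : T -> bool) : Prop :=
  forall u v, adj u v -> g u = g v.

Lemma labelling_two_colors f : col_labelling f -> at_most_two_colors adj col.
Proof.
move=> lab x u v w xu xv xw.
have := lab _ _ _ xu xv; have := lab _ _ _ xu xw; have := lab _ _ _ xv xw.
case: (f x u); case: (f x v); case: (f x w) => /= /esym/eqP A /esym/eqP B /esym/eqP C;
  by [apply: Or31 | apply: Or32 | apply: Or33].
Qed.

Lemma labelling_xor f g : col_labelling f -> col_labelling (fun v u => f v u == g v).
Proof.
by move=> lab v u w vu vw; rewrite -lab //; case: (f v u); case: (f v w); case: (g v).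
Qed.

Lemma labelling_no_conflict (a : rel T) f :
  col_labelling f -> (forall u v, adj u v -> f v u = ~~ f u v) ->
  (forall u v, a u v -> adj u v /\ f u v) -> ~ conflict col a.
Proof.
move=> lab anti af [z [u [w]]].
case=> [[/af[uz fu] [/af[wz fw] ne]]|[/af[zu fu] [/af[zw fw] ne]]|[/af[uz fu] [/af[zw fw] e]]].
- have zu : adj z u by rewrite adj_sym.
  have zw : adj z w by rewrite adj_sym.
  apply/ne/eqP; rewrite (col_sym uz) (col_sym wz) -lab //.
  by rewrite (anti _ _ uz) (anti _ _ wz) fu fw.
- by apply/ne/eqP; rewrite -lab // fu fw.
- have zu : adj z u by rewrite adj_sym.
  by move/eqP: e; rewrite (col_sym uz) -lab // (anti _ _ uz) fu fw.
Qed.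

(* Each vertex of the cycle contributes [f v (prev v) + f v (next v)], which is odd
   exactly when [v] is not monochromatic. *)
Lemma labelling_mono_count f x q :
  col_labelling f -> cycle adj (x :: q) -> uniq (x :: q) ->
  odd (mono_count col (x :: q)) =
    odd (size (x :: q)) (+) odd (walk_sum (fun a b => f a b + f b a) x (rcons q x)).
Proof.
set c := x :: q => lab cyc uc.
have monoE : mono_count col c = count (fun v => f v (prev c v) == f v (next c v)) c.
  apply: eq_in_count => v vc /=.
  have pv := prev_cycle cyc vc; have vn := next_cycle cyc vc.
  by rewrite (col_sym pv) lab // adj_sym.
have sum_odd (r : seq T) : odd (\sum_(v <- r) ((f v (prev c v) == f v (next c v))
                                 + f v (prev c v) + f v (next c v))) = odd (size r).
  elim: r => [|v r IHr]; rewrite ?big_nil ?big_cons //= !oddD IHr.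
  by case: (f v _); case: (f v _).
rewrite walk_sumD -(sum_prev (fun a b => f b a : nat) uc) -(sum_next (fun a b => f a b : nat) uc).
rewrite monoE -sum1_count big_mkcond -sum_odd !big_split /= !oddD.
by case: odd; case: odd; case: odd.
Qed.

Section AcyclicOrientation.
Variable a : rel T.
Hypothesis a_total : forall u v, adj u v -> a u v || a v u.
Hypothesis a_acyclic : acyclic_digraph a.
Hypothesis a_no_conflict : ~ conflict col a.

Let ancestors v := #|[set x | connect a x v]|.

Lemma ancestors_lt u v : a u v -> ancestors u < ancestors v.
Proof.
move=> auv; apply/proper_card/properP; split.
  by apply/subsetP=> x; rewrite !inE => /connect_trans; apply; apply: connect1.
by exists v; rewrite !inE ?connect0 //; apply: a_acyclic.
Qed.

Let topo_order := sort (relpre ancestors leq) (enum T).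

Lemma topo_order_index u v : a u v -> index u topo_order < index v topo_order.
Proof.
move=> /ancestors_lt lt_uv; rewrite ltnNge; apply/negP => le_vu.
have sorted_topo : sorted (relpre ancestors leq) topo_order.
  by apply: sort_sorted => x y; apply: leq_total.
have mem_topo x : x \in topo_order by rewrite mem_sort mem_enum.
have := sorted_leq_nth (fun y x z => @leq_trans (ancestors y) (ancestors x) (ancestors z))
  (fun x => leqnn (ancestors x)) u sorted_topo.
move=> /(_ (index v topo_order) (index u topo_order)).
rewrite !inE !index_mem !nth_index // => /(_ (mem_topo v) (mem_topo u) le_vu).
by rewrite leqNgt lt_uv.
Qed.

Lemma type5_of_acyclic_orientation : PC_acyclic_type5 adj col.
Proof.
have a_asym u v : a u v -> ~~ a v u.
  by move=> auv; apply/negP => avu; move: (a_acyclic auv); rewrite connect1.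
have before_arc v u : adj v u -> (index v topo_order < index u topo_order) = a v u.
  move=> vu; case/orP: (a_total vu) => [avu|auv]; first by rewrite avu topo_order_index.
  by rewrite (negbTE (a_asym _ _ auv)) ltnNge ltnW ?topo_order_index.
exists topo_order; split.
- by rewrite sort_uniq enum_uniq.
- by move=> v; rewrite mem_sort mem_enum.
move=> v u w vu vw; split; rewrite ?before_arc // -?(adj_sym v) ?before_arc //.
- move=> avu avw; apply/eqP/negPn/negP => ne; apply: a_no_conflict.
  by exists v, u, w; apply: Or32; do !split=> //; apply/eqP.
- move=> auv awv; apply/eqP/negPn/negP => ne; apply: a_no_conflict.
  by exists v, u, w; apply: Or31; rewrite -(col_sym vu) -(col_sym vw); do !split=> //; apply/eqP.
- move=> auv avw e; apply: a_no_conflict.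
  by exists v, u, w; apply: Or33; rewrite col_sym // adj_sym.
Qed.

End AcyclicOrientation.

Section Type5Ordering.
Variable s : seq T.
Hypothesis s_type5 : type5_ordering adj col s.

Let before u v := index u s < index v s.

Lemma before_neg u v : u != v -> before v u = ~~ before u v.
Proof.
have [_ mem_s _] := s_type5.
move=> neq_uv; rewrite /before -leqNgt ltn_neqAle; case: eqP => //= idx_uv.
by case/eqP: neq_uv; rewrite -(nth_index u (mem_s u)) -idx_uv nth_index.
Qed.

Lemma type5_labelling : col_labelling before.
Proof.
have [_ _ s5] := s_type5.
move=> v u w vu vw; have [s5_out s5_in s5_mid] := s5 v u w vu vw.
have [_ _ s5_mid'] := s5 v w u vw vu.
have uv := before_neg (adj_neq vu); have wv := before_neg (adj_neq vw).
move: s5_out s5_in s5_mid s5_mid'; rewrite /before in uv wv *; rewrite uv wv.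
case: (index v s < index u s); case: (index v s < index w s) => /= s5_out s5_in s5_mid s5_mid'.
- by rewrite s5_out // !eqxx.
- by apply/esym/eqP => e; apply: (s5_mid' erefl erefl); rewrite e.
- by apply/esym/eqP => e; apply: (s5_mid erefl erefl); rewrite e.
- by rewrite s5_in // !eqxx.
Qed.

Lemma type5_cycle_condition : cycle_condition adj col.
Proof.
split=> [|[|x q] //]; first exact: labelling_two_colors type5_labelling.
case/and3P=> cyc uc _; split.
- rewrite -has_count; apply/hasP.
  have [m xq_m max_m] := @arg_maxnP T x (fun i => i \in x :: q) (index^~ s) (mem_head x q).
  exists m => //; have pm := prev_cycle cyc xq_m; have mn := next_cycle cyc xq_m.
  have le_pm : index (prev (x :: q) m) s <= index m s by apply: max_m; rewrite mem_prev.
  have le_nm : index (next (x :: q) m) s <= index m s by apply: max_m; rewrite mem_next.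
  have mp : adj m (prev (x :: q) m) by rewrite adj_sym.
  rewrite (col_sym pm) -type5_labelling // /before.
  by rewrite !ltnNge le_pm le_nm.
- rewrite (labelling_mono_count type5_labelling cyc uc).
  have -> : walk_sum (fun a b => before a b + before b a) x (rcons q x) = size (rcons q x).
    rewrite -(walk_sum1 x); apply: eq_path_walk_sum cyc _ => a b ab.
    by rewrite (before_neg (adj_neq ab)); case: (before a b).
  by rewrite size_rcons /= addbb.
Qed.

(* The invariant of the procedure: edges with a marked endpoint are oriented along
   [s] or against it, uniformly on each connected component. *)
Definition oriented_along (st : pstate T) : Prop :=
  exists2 g, component_const g & forall u v,
    Defs.arc st u v = [&& adj u v, (u \in marked st) || (v \in marked st) & before u v == g u].

Lemma orient_at_along (M : {set T}) (a : rel T) (g g' : T -> bool) y i out :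
  (forall u v, a u v = [&& adj u v, (u \in M) || (v \in M) & before u v == g u]) ->
  component_const g' ->
  (forall v, adj y v -> ((col y v == i) == out) = (before y v == g' y)) ->
  (forall u v, adj u v -> (u \in M) || (v \in M) -> g u = g' u) ->
  forall u v, orient_at adj col a y i out u v =
    [&& adj u v, (u \in y |: M) || (v \in y |: M) & before u v == g' u].
Proof.
move=> aE g'_const y_out g_g' u v; rewrite /orient_at !in_setU1.
have [->|uy] := eqVneq u y; first by case yv: (adj y v) => //=; apply: y_out.
have [->|vy] := eqVneq v y.
  rewrite orbT (adj_sym u); case yu: (adj y u) => //=.
  rewrite -(g'_const _ _ yu) (before_neg (adj_neq yu)).
  move: (y_out u yu); clear y_out.
  by case: (col y u == i); case: out; case: (before y u); case: (g' y).
rewrite /= aE.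
by case uv: (adj u v) => //=; case M_uv: (_ || _) => //=; rewrite (g_g' u v).
Qed.

Lemma oriented_along_init : oriented_along (init_state T).
Proof. by exists (fun _ => true) => // u v; rewrite /= !inE andbF. Qed.

Lemma oriented_along_step st st' :
  pstep adj col st st' -> oriented_along st -> oriented_along st'.
Proof.
case=> {st st'} [st x i out _ xNconn x_i|st y w yNM awy|st y w yNM ayw] [g g_const aE].
- have conn_const : component_const (connect adj x).
    move=> u v uv; apply/idP/idP => /connect_trans; apply; apply: connect1 => //.
    by rewrite adj_sym.
  pose g' b w := if connect adj x w then b else g w.
  have g'_const b : component_const (g' b).
    by move=> u v uv; rewrite /g' (conn_const _ _ uv); case: ifP => // _; apply: g_const.
  have g_g' b u v : adj u v -> (u \in marked st) || (v \in marked st) -> g u = g' b u.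
    move=> uv /orP[uM|vM]; rewrite /g'; case: ifPn => // xu.
      by move: (xNconn u uM); rewrite xu.
    by move: (xNconn v vM); rewrite -(conn_const _ _ uv) xu.
  case: x_i => [[z [xz <-]]|x_isolated].
  + exists (g' (before x z == out)) => // u0 v0.
    apply: (orient_at_along aE (g'_const _) _ (g_g' _)) => v xv.
    rewrite /g' connect0 -type5_labelling //.
    by case: (before x v); case: (before x z); case: out.
  + exists (g' true) => // u0 v0.
    apply: (orient_at_along aE (g'_const _) _ (g_g' _)) => v xv.
    by move: (x_isolated v); rewrite xv.
- have /and3P[wy wM /eqP sw] : [&& adj w y, (w \in marked st) || (y \in marked st) &
                                 before w y == g w] by rewrite -aE.
  exists g => // u0 v0; apply: (orient_at_along aE) => // v yv.
  have yw : adj y w by rewrite adj_sym.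
  rewrite (col_sym wy) -type5_labelling // (before_neg (adj_neq wy)) -(g_const _ _ wy) sw.
  by case: (before y v); case: (g w).
- have /and3P[yw yM /eqP sy] : [&& adj y w, (y \in marked st) || (w \in marked st) &
                                 before y w == g y] by rewrite -aE.
  exists g => // u0 v0; apply: (orient_at_along aE) => // v yv.
  rewrite -type5_labelling // sy.
  by case: (before y v); case: (g y).
Qed.

Lemma reachable_oriented_along st : reachable adj col st -> oriented_along st.
Proof.
elim=> [|st1 st2 _ IH _ step]; first exact: oriented_along_init.
exact: oriented_along_step step IH.
Qed.

Lemma oriented_along_no_conflict st : oriented_along st -> ~ conflict col (Defs.arc st).
Proof.
case=> g g_const aE; apply: (labelling_no_conflict (f := fun u v => before u v == g u)).
- exact: labelling_xor type5_labelling.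
- move=> u v uv; rewrite (before_neg (adj_neq uv)) (g_const _ _ uv).
  by case: (before u v); case: (g v).
- by move=> u v; rewrite aE => /and3P[].
Qed.

Lemma terminal_all_marked st :
  oriented_along st -> terminal adj col st -> forall v, v \in marked st.
Proof.
case=> g g_const aE term y; apply/negPn/negP => yNM.
have [/existsP[m /andP[mM /connectP[p yp m_last]]]|] :=
  boolP [exists m, (m \in marked st) && connect adj y m].
  have lM : last y p \in marked st by rewrite -m_last.
  have [u [v [uv uNM vM]]] := path_crossing_edge yp yNM lM.
  have vu : adj v u by rewrite adj_sym.
  have := aE u v; have := aE v u.
  rewrite uv vu vM orbT /= (before_neg (adj_neq uv)) (g_const _ _ uv).
  case: (before u v) (g v) => -[] /= avu auv.
  - by apply: (term _ (pstep_out adj col uNM (_ : Defs.arc st u v))); rewrite auv.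
  - by apply: (term _ (pstep_in adj col uNM (_ : Defs.arc st v u))); rewrite avu.
  - by apply: (term _ (pstep_in adj col uNM (_ : Defs.arc st v u))); rewrite avu.
  - by apply: (term _ (pstep_out adj col uNM (_ : Defs.arc st u v))); rewrite auv.
rewrite negb_exists => /forallP yNconn.
have yNconn' m : m \in marked st -> ~~ connect adj y m.
  by move=> mM; move: (yNconn m); rewrite mM.
case: (pickP (adj y)) => [z yz|y_isolated].
  by apply: (term _ (@pstep_start _ _ adj col st y (col y z) true yNM yNconn' _)); left; exists z.
apply: (term _ (@pstep_start _ _ adj col st y (col y y) true yNM yNconn' _)).
by right=> z; rewrite y_isolated.
Qed.

Lemma connect_along_index (a : rel T) (g : T -> bool) : component_const g ->
  (forall u v, a u v = adj u v && (before u v == g u)) ->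
  forall v w, connect a v w ->
    if g v then index v s <= index w s else index w s <= index v s.
Proof.
move=> g_const aE v w /connectP[p vp ->] {w}.
elim: p v vp => [|z p IHp] v /=; first by case: (g v).
rewrite aE => /andP[/andP[vz /eqP bvz] zp].
have := IHp z zp; rewrite -(g_const _ _ vz); move: bvz; rewrite /before.
case: (g v) => [lt_vz le_z|ge_vz le_z]; first exact: leq_trans (ltnW lt_vz) le_z.
by apply: leq_trans le_z _; rewrite leqNgt ge_vz.
Qed.

Lemma type5_procedure_succeeds : procedure_succeeds_acyclic adj col.
Proof.
split; first exact: labelling_two_colors type5_labelling.
  by move=> st /reachable_oriented_along /oriented_along_no_conflict.
move=> st /reachable_oriented_along st_s term; have all_marked := terminal_all_marked st_s term.
case: st_s => g g_const aE.
have aE' u v : Defs.arc st u v = adj u v && (before u v == g u) by rewrite aE !all_marked.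
split=> [u v uv|u v].
  rewrite !aE' uv adj_sym uv /= (before_neg (adj_neq uv)) (g_const _ _ uv).
  by case: (before u v); case: (g v).
rewrite aE' => /andP[uv /eqP buv]; apply/negP => /(connect_along_index g_const aE').
rewrite -(g_const _ _ uv) -buv; have := before_neg (adj_neq uv); rewrite /before.
by case: (ltnP (index u s) (index v s)) => // _ lt_vu; rewrite leqNgt lt_vu.
Qed.

End Type5Ordering.

Lemma pstep_card_marked st st' : pstep adj col st st' -> #|marked st'| = #|marked st|.+1.
Proof. by case=> [? x ? ? xNM _ _|? y ? yNM _|? y ? yNM _] /=; rewrite cardsU1 ?xNM ?yNM. Qed.

(* Every step marks a new vertex, so a conflict-free run must stop. *)
Lemma reachable_terminal_exists :
  (forall st, reachable adj col st -> ~ conflict col (Defs.arc st)) ->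
  exists2 st, reachable adj col st & terminal adj col st.
Proof.
move=> no_conflict.
suff: forall n st, reachable adj col st -> #|T| - #|marked st| <= n ->
    exists2 st', reachable adj col st' & terminal adj col st'.
  by apply; first exact: reach_init.
elim=> [|n IHn] st st_reach.
  move=> bound; exists st => // st' /pstep_card_marked card_st'.
  have : #|marked st'| <= #|T| by apply: max_card.
  lia.
have [st_term|] := classic (terminal adj col st); first by exists st.
move=> /not_all_ex_not[st' /NNPP step] bound; apply: (IHn st').
  exact: reach_step st_reach (no_conflict _ st_reach) step.
have : #|marked st'| <= #|T| by apply: max_card.
by have := pstep_card_marked step; lia.
Qed.

Lemma procedure_type5 : procedure_succeeds_acyclic adj col -> PC_acyclic_type5 adj col.
Proof.
case=> _ no_conflict final.
have [st st_reach st_term] := reachable_terminal_exists no_conflict.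
have [st_total st_acyclic] := final st st_reach st_term.
exact: type5_of_acyclic_orientation st_total st_acyclic (no_conflict st st_reach).
Qed.

Section CycleCondition.
Hypothesis two_colors : at_most_two_colors adj col.
Hypothesis cycles_mono : forall p, is_graph_cycle adj p ->
  0 < mono_count col p /\ ~~ odd (mono_count col p).

Definition side (v u : T) : bool :=
  if [pick z | adj v z] is Some z then col v u == col v z else false.

Lemma side_labelling : col_labelling side.
Proof.
move=> v u w vu vw; rewrite /side; case: pickP => [z vz|]; last by move/(_ u); rewrite vu.
case: (two_colors vu vw vz) => [->|->|->]; rewrite ?eqxx //.
  by rewrite [true == _]eq_sym eqb_id eq_sym.
by rewrite eqb_id.
Qed.

Definition cross (u v : T) : nat := side u v == side v u.

Lemma closed_walk_cross_even x p :
  path adj x p -> last x p = x -> ~~ odd (walk_sum cross x p).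
Proof.
case/lastP: p => [|q y] //; rewrite last_rcons => + yx; subst y.
move: x q; apply: (closed_walk_ind (P := fun x q => ~~ odd (walk_sum cross x (rcons q x)))).
- move=> x q uq xq_closed; have [|short] := ltnP 1 (size q).
    move=> long; have cyc : is_graph_cycle adj (x :: q) by apply/and3P.
    have odd_sum : odd (walk_sum cross x (rcons q x)) (+)
        odd (walk_sum (fun a b => side a b + side b a) x (rcons q x)) = odd (size (rcons q x)).
      rewrite -oddD -walk_sumD odd_walk_sum // => a b.
      by rewrite /cross; case: (side a b); case: (side b a).
    have [_] := cycles_mono cyc; rewrite (labelling_mono_count side_labelling) //.
    by rewrite size_rcons in odd_sum; rewrite -odd_sum; case: odd; case: odd.
  case: q uq xq_closed short => [|y [|z q]] //= _; first by rewrite adj_irr.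
  by rewrite /cross eq_sym addn0 addnn odd_double.
- move=> x a b; rewrite rcons_cat /= -cat_rcons walk_sum_cat last_rcons oddD.
  by case: odd; case: odd.
- move=> x a y b d; rewrite !rcons_cat /= rcons_cat /= -!cat_rcons !walk_sum_cat !last_rcons !oddD.
  by case: odd; case: odd; case: odd.
Qed.

Lemma root_path_exists v : exists p, path adj (root adj v) p && (last (root adj v) p == v).
Proof.
have : connect adj (root adj v) v by rewrite (sym_connect_sym adj_sym) connect_root.
by case/connectP=> p rp lp; exists p; rewrite rp -lp eqxx.
Qed.

Definition root_path (v : T) : seq T := xchoose (root_path_exists v).

(* By [closed_walk_cross_even], the parity does not depend on the chosen path. *)
Definition potential (v : T) : bool := odd (walk_sum cross (root adj v) (root_path v)).

Lemma potential_edge u v : adj u v -> potential v = potential u (+) odd (cross u v).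
Proof.
move=> uv; have root_uv : root adj u = root adj v.
  by apply/(rootP (sym_connect_sym adj_sym))/connect1.
have /andP[rpu /eqP lpu] := xchooseP (root_path_exists u).
have /andP[rpv /eqP lpv] := xchooseP (root_path_exists v).
rewrite -/(root_path u) root_uv in rpu lpu; rewrite -/(root_path v) in rpv lpv.
rewrite /potential root_uv; set r := root adj v in rpu lpu rpv lpv *.
set L := root_path u ++ v :: rev (belast r (root_path v)).
have rL : path adj r L.
  rewrite cat_path rpu lpu /= uv /=; have := rev_path adj r (root_path v).
  by rewrite lpv => ->; apply: sub_path rpv => a b; rewrite adj_sym.
have lL : last r L = r by rewrite last_cat lpu /= -{1}lpv last_rev_belast.
have := closed_walk_cross_even rL lL.
rewrite walk_sum_cat lpu /= -[X in walk_sum _ X (rev _)]lpv walk_sum_rev.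
rewrite (@eq_walk_sum _ (fun a b => cross b a) cross); last by move=> a b; rewrite /cross eq_sym.
rewrite !oddD.
by case: (odd (walk_sum cross r (root_path u))); case: (odd (walk_sum cross r (root_path v)));
  case: (odd (cross u v)).
Qed.

Definition forward (u v : T) : bool := side u v == potential u.

Lemma forward_labelling : col_labelling forward.
Proof. exact: labelling_xor side_labelling. Qed.

Lemma forward_anti u v : adj u v -> forward v u = ~~ forward u v.
Proof.
move=> uv; rewrite /forward (potential_edge uv) /cross oddb.
by case: (side u v); case: (side v u); case: (potential u).
Qed.

Definition forward_orientation (u v : T) : bool := adj u v && forward u v.

(* On a directed cycle every vertex has one in-arc and one out-arc, so no vertex
   is monochromatic. *)
Lemma forward_orientation_acyclic : acyclic_digraph forward_orientation.
Proof.
move=> u v uv; apply/negP => /connectP[p vp lp].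
have : path forward_orientation u (rcons (belast v p) u) by rewrite [X in rcons _ X]lp -lastI /= uv.
move: u (belast v p) {uv vp lp}.
apply: (closed_walk_ind (P := fun _ _ => False)) => // x q uq.
rewrite -/(cycle _ (x :: q)) => cyc.
have [|short] := ltnP 1 (size q); last first.
  case: q uq cyc short => [|y [|z q]] //=; first by rewrite /forward_orientation adj_irr.
  rewrite /forward_orientation => _ /and3P[/andP[xy f_xy] /andP[_ f_yx] _] _.
  by move: f_yx; rewrite (forward_anti xy) f_xy.
move=> long; have adj_cyc : cycle adj (x :: q).
  by apply: sub_path cyc => a b /andP[].
have [] := cycles_mono (introT and3P (And3 adj_cyc uq long)).
rewrite -has_count => /hasP[w xq_w mono_w] _; move: mono_w.
have /andP[pw f_pw] := prev_cycle cyc xq_w; have /andP[wn f_wn] := next_cycle cyc xq_w.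
have wp : adj w (prev (x :: q) w) by rewrite adj_sym.
by rewrite (col_sym pw) -forward_labelling // (forward_anti pw) f_pw f_wn.
Qed.

Lemma cycle_condition_type5 : PC_acyclic_type5 adj col.
Proof.
apply: (@type5_of_acyclic_orientation forward_orientation).
- move=> u v uv; rewrite /forward_orientation uv adj_sym uv (forward_anti uv).
  by case: forward.
- exact: forward_orientation_acyclic.
- apply: (labelling_no_conflict forward_labelling forward_anti).
  by move=> u v /andP[].
Qed.

End CycleCondition.

End EdgeColoredGraph.

Theorem theorem5 (T : finType) (K : eqType) (adj : rel T) (col : T -> T -> K)
  (adj_sym : symmetric adj) (adj_irr : irreflexive adj)
  (col_sym : forall u v, adj u v -> col u v = col v u) :
  [/\ (PC_acyclic_type5 adj col <-> procedure_succeeds_acyclic adj col),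
      (procedure_succeeds_acyclic adj col <-> cycle_condition adj col) &
      (cycle_condition adj col <-> PC_acyclic_type5 adj col)].
Proof.
have type5_proc : PC_acyclic_type5 adj col -> procedure_succeeds_acyclic adj col.
  by case=> s /(type5_procedure_succeeds adj_sym adj_irr col_sym).
have proc_type5 := procedure_type5 adj_sym col_sym.
have type5_cycle : PC_acyclic_type5 adj col -> cycle_condition adj col.
  by case=> s /(type5_cycle_condition adj_sym adj_irr col_sym).
have cycle_type5 : cycle_condition adj col -> PC_acyclic_type5 adj col.
  by case=> two_colors /(cycle_condition_type5 adj_sym adj_irr col_sym two_colors).
by split; split; auto.
Qed.
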